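(* Setting. Fix integers $N,M,J\ge 1$, a time $t$, and dimensions $n_x,n_u,n,l$. The agent's predicted states obey $x_{t|t}=x_t$ (given) and $x_{k+1|t}=A_kx_{k|t}+B_ku_{k|t}+E_kw_{k|t}$ for $k=t,\dots,t+N-1$, with $x\in\mathbb{R}^{n_x}$, $u\in\mathbb{R}^{n_u}$, $w\in\mathbb{R}^{n_x}$. For $i=1,\dots,M$ the $i$-th obstacle's predicted states obey $o^i_{t|t}=o^i_t$ (given) and $o^i_{k+1|t}=T^i_ko^i_{k|t}+q^i_k+F^i_kn^i_{k|t}$; write $o_{k|t},n_{k|t}$ for the stacked vectors over $i$ and $T_k,F_k$ (block diagonal), $q_k$ (stacked) for the combined obstacle dynamics. Nominal obstacle states are $\bar o_{t|t}=o_t$, $\bar o_{k+1|t}=T_k\bar o_{k|t}+q_k$, with components $\bar o^i_{k|t}$. The inputs are given by the policy $$u_{k|t}=h_{k|t}+\sum_{l=t}^{k-1}M_{l,k|t}w_{l|t}+K_{k|t}(o_{k|t}-\bar o_{k|t}),\quad k=t,\dots,t+N-1,$$ with parameters $\boldsymbol\theta_t=(\{h_{k|t}\},\{M_{l,k|t}\},\{K_{k|t}\})$. Let $\bar x_{t|t}=x_t$, $\bar x_{k+1|t}=A_k\bar x_{k|t}+B_kh_{k|t}$ be the nominal (noise-free) agent trajectory. Let $\mathbf{w}_t=[w_{t|t}^\top\cdots w_{t+N-1|t}^\top]^\top$, $\mathbf{n}_t=[n_{t|t}^\top\cdots n_{t+N-1|t}^\top]^\top$, $\mathbf{v}_t=[w_{t|t}^\top\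 n_{t|t}^\top\cdots w_{t+N-1|t}^\top\ n_{t+N-1|t}^\top]^\top$, and let $\mathbf{P}$ be the permutation matrix with $[\mathbf{w}_t^\top\ \mathbf{n}_t^\top]^\top=\mathbf{P}\mathbf{v}_t$. Geometry and constraints: $\mathcal{K}\subset\mathbb{R}^l$ is a closed convex cone with non-empty interior and dual cone $\mathcal{K}^*$; $G,G^i\in\mathbb{R}^{l\times n}$, $g,g^i\in\mathbb{R}^l$; $R_k,R^i_k$ are given rotation matrices; $C\in\mathbb{R}^{n\times n_x}$, $c_t\in\mathbb{R}^n$; $F^x_j\in\mathbb{R}^{1\times n_x}$, $F^u_j\in\mathbb{R}^{1\times n_u}$, $f_j\in\mathbb{R}$ for $j=1,\dots,J$. Dual variables are $\lambda^i_{k|t},\nu^i_{k|t}\in\mathbb{R}^l$ for $k=t+1,\dots,t+N$, $i=1,\dots,M$. Say that the constraints (CA) and (XU) hold if (CA) for all $k\in\{t+1,\dots,t+N\}$, $i\in\{1,\dots,M\}$: $\lambda^i_{k|t},\nu^i_{k|t}\in\mathcal{K}^*$, $\|\lambda^{i\top}_{k|t}GR_k^\top\|_2\le1$, $\lambda^{i\top}_{k|t}GR_k^\top=-\nu^{i\top}_{k|t}G^iR_k^{i\top}$, and $\lambda^{i\top}_{k|t}\big(GR_k^\top(C(x_{k|t}-o^i_{k|t})+c_t)+g\big)<-\nu^{i\top}_{k|t}g^i$; (XU) for all $k\in\{t,\dots,t+N-1\}$, $j\in\{1,\dots,J\}$: $F^x_jx_{k+1|t}+F^u_ju_{k|t}\le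 f_j$. Define, for $k\in\{t,\dots,t+N\}$, $i$, $j$: $Y^i_{k|t}=-\lambda^{i\top}_{k|t}g-\nu^{i\top}_{k|t}g^i-\lambda^{i\top}_{k|t}GR_k^\top c_t-\lambda^{i\top}_{k|t}GR_k^\top C(\bar x_{k|t}-\bar o^i_{k|t})$; $Z^i_{k|t}$ the row vector such that $\lambda^{i\top}_{k|t}GR_k^\top C(x_{k|t}-o^i_{k|t})=\lambda^{i\top}_{k|t}GR_k^\top C(\bar x_{k|t}-\bar o^i_{k|t})+Z^i_{k|t}[\mathbf{w}_t^\top\ \mathbf{n}_t^\top]^\top$ for all noise values; $\bar Y^j_{k|t}=f_j-F^x_j\bar x_{k+1|t}-F^u_jh_{k|t}$; $\bar Z^j_{k|t}$ the row vector such that $F^x_jx_{k+1|t}+F^u_ju_{k|t}=F^x_j\bar x_{k+1|t}+F^u_jh_{k|t}+\bar Z^j_{k|t}[\mathbf{w}_t^\top\ \mathbf{n}_t^\top]^\top$ for all noise values. (These are affine in $\boldsymbol\theta_t$ for fixed duals, bilinear jointly.) Conclusions. 1) Let $\Gamma$ be non-singular, $\gamma>0$, $\mathbf{\Gamma}=I_N\otimes\Gamma$. Then for given $(\boldsymbol\theta_t,\{\lambda^i_{k|t}\},\{\nu^i_{k|t}\})$, (CA) and (XU) hold for every $\mathbf{v}_t$ with $\|\mathbf{\Gamma}\mathbf{v}_t\|_\infty\le\gamma$ (i.e. each $[w_{k|t}^\top\ n_{k|t}^\top]^\top\in\{d\mid\|\Gamma d\|_\infty\le\gamma\}$) if and only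 if for all $k\in\{t,\dots,t+N-1\}$, $i$, $j$: $\lambda^i_{k+1|t},\nu^i_{k+1|t}\in\mathcal{K}^*$, $\|\lambda^{i\top}_{k+1|t}GR_{k+1}^\top\|_2\le1$, $\lambda^{i\top}_{k+1|t}GR_{k+1}^\top=-\nu^{i\top}_{k+1|t}G^iR^{i\top}_{k+1}$, $Y^i_{k+1|t}>\gamma\|Z^i_{k+1|t}\mathbf{P}\mathbf{\Gamma}^{-1}\|_1$, and $\bar Y^j_{k|t}-\gamma\|\bar Z^j_{k|t}\mathbf{P}\mathbf{\Gamma}^{-1}\|_1\ge0$. 2) Let $\Sigma$ be a covariance matrix, $\mathbf{\Sigma}=I_N\otimes\Sigma$, $\epsilon\in(0,1)$, and suppose $\mathbf{v}_t\sim\mathcal{N}(0,\mathbf{\Sigma})$ (i.e. the $[w_{k|t}^\top\ n_{k|t}^\top]^\top$ are i.i.d. $\mathcal{N}(0,\Sigma)$). Set $\gamma_{ca}=\Phi^{-1}(1-\frac{\epsilon}{2NM})$, $\gamma_{xu}=\Phi^{-1}(1-\frac{\epsilon}{2NJ})$, where $\Phi^{-1}$ is the quantile function of the standard normal distribution. If for all $k\in\{t,\dots,t+N-1\}$, $i$, $j$: $\lambda^i_{k+1|t},\nu^i_{k+1|t}\in\mathcal{K}^*$, $\|\lambda^{i\top}_{k+1|t}GR_{k+1}^\top\|_2\le1$, $\lambda^{i\top}_{k+1|t}GR_{k+1}^\top=-\nu^{i\top}_{k+1|t}G^iR^{i\top}_{k+1}$, $Y^i_{k+1|t}>\gamma_{ca}\|Z^i_{k+1|t}\mathbf{P}\mathbf{\Sigma}^{1/2}\|_2$,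 and $\bar Y^j_{k|t}\ge\gamma_{xu}\|\bar Z^j_{k|t}\mathbf{P}\mathbf{\Sigma}^{1/2}\|_2$, then the probability that (CA) and (XU) both hold is at least $1-\epsilon$. 3) With $\mathbf{\Sigma}$, $\epsilon$ as in 2) but with $\gamma_{ca}=\sqrt{\frac{2NM-\epsilon}{\epsilon}}$, $\gamma_{xu}=\sqrt{\frac{2NJ-\epsilon}{\epsilon}}$: if the same conditions as in 2) hold, then for every probability distribution of $\mathbf{v}_t$ with $\mathbb{E}(\mathbf{v}_t)=0$ and $\mathbb{E}(\mathbf{v}_t\mathbf{v}_t^\top)=\mathbf{\Sigma}$, the probability that (CA) and (XU) both hold is at least $1-\epsilon$.
   Context: $\mathcal{K}^*=\{y\mid y^\top x\ge0\ \forall x\in\mathcal{K}\}$. $\mathbf{\Sigma}^{1/2}$ denotes the symmetric positive semidefinite square root. $\otimes$ is the Kronecker product. Here $\lambda^i_{k|t},\nu^i_{k|t}$ and the policy parameters are deterministic decision variables (not depending on the noise), while $x_{k|t},u_{k|t},o_{k|t}$ are the closed-loop predicted quantities, which are affine functions of the noise vector $\mathbf{v}_t$. In the paper, the sets described in parts 1), 2)–3) are called $\mathcal{F}_t(\mathbf{D1})$, $\mathcal{F}_t(\mathbf{D2})$, $\mathcal{F}_t(\mathbf{D3})$ (the latter two being inner-approximations of the chance-constrained feasible sets). *)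

From HB Require Import structures.
From mathcomp Require Import all_boot all_order all_algebra.
From mathcomp Require Import all_classical all_reals all_analysis.
Set Implicit Arguments.
Unset Strict Implicit.
Unset Printing Implicit Defensive.
Import Order.TTheory GRing.Theory Num.Theory.
Import numFieldNormedType.Exports.
Local Open Scope classical_set_scope.
Local Open Scope ring_scope.

Section Defs.
Variable R : realType.

(* inverse of the row-major index map  (i, j) |-> i * n + j  used by mxvec *)
Definition unidx {m n : nat} (k : 'I_(m * n)) : 'I_m * 'I_n :=
  enum_val (cast_ord (esym (mxvec_cast m n)) k).

(* Kronecker product A (x) B, with the row-major block indexing of mxvec *)
Definition kron {m1 n1 m2 n2 : nat} (A : 'M[R]_(m1, n1)) (B : 'M[R]_(m2, n2))
  : 'M[R]_(m1 * m2, n1 * n2) :=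
  \matrix_(i, j) (A (unidx i).1 (unidx j).1 * B (unidx i).2 (unidx j).2).

(* vertical stacking [f 0; f 1; ...; f (m-1)] of m column vectors *)
Definition stack {m p : nat} (f : 'I_m -> 'cV[R]_p) : 'cV[R]_(m * p) :=
  (mxvec (\matrix_(i < m) (f i)^T))^T.

(* the i-th block of size p of a stacked column vector (inverse of stack) *)
Definition block {m p : nat} (v : 'cV[R]_(m * p)) (i : 'I_m) : 'cV[R]_p :=
  (row i (vec_mx v^T))^T.

Definition norm1 {m : nat} (r : 'rV[R]_m) : R := \sum_j `|r 0 j|.
Definition norm2 {m : nat} (r : 'rV[R]_m) : R := Num.sqrt (\sum_j r 0 j ^+ 2).
Definition norminf {m : nat} (c : 'cV[R]_m) : R := \big[Num.max/0]_i `|c i 0|.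

Definition sym_psd {m : nat} (S : 'M[R]_m) : Prop :=
  S^T = S /\ forall x : 'cV[R]_m, 0 <= (x^T *m S *m x) 0 0.

Definition rotation {m : nat} (Q : 'M[R]_m) : Prop :=
  Q^T *m Q = 1%:M /\ \det Q = 1.

Definition proper_cone {m : nat} (K : set 'cV[R]_m) : Prop :=
  closed K /\ K !=set0 /\
  (forall x, K x -> forall a : R, 0 <= a -> K (a *: x)) /\
  (forall x y, K x -> K y -> forall a : R, 0 <= a <= 1 -> K ((1 - a) *: x + a *: y)) /\
  interior K !=set0.

Definition dual_cone {m : nat} (K : set 'cV[R]_m) : set 'cV[R]_m :=
  [set y | forall x, K x -> 0 <= (y^T *m x) 0 0].

Definition Phi (x : R) : R := fine (normal_prob (0:R) 1 [set y | y <= x]).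

(* CDF at r of N(0, s^2) for s >= 0 (s = 0 : point mass at 0) *)
Definition gauss_cdf (s r : R) : R :=
  if 0 < s then Phi (r / s) else (if 0 <= r then 1 else 0).

Variables (nx nu nn M : nat).

(* agent and obstacle dynamics, indexed by absolute time k *)
Record dynamics := Dynamics {
  A : nat -> 'M[R]_nx;
  B : nat -> 'M[R]_(nx, nu);
  E : nat -> 'M[R]_nx;
  T : nat -> 'I_M -> 'M[R]_nx;
  q : nat -> 'I_M -> 'cV[R]_nx;
  F : nat -> 'I_M -> 'M[R]_(nx, nn);
  xt : 'cV[R]_nx;
  ot : 'I_M -> 'cV[R]_nx
}.

(* policy parameters theta_t, indexed by absolute times *)
Record policy := Policy {
  h : nat -> 'cV[R]_nu;
  Mg : nat -> nat -> 'M[R]_(nu, nx);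
  Kg : nat -> 'M[R]_(nu, M * nx)
}.

Variables (N : nat) (t : nat) (sys : dynamics) (th : policy).

Definition D := (nx + M * nn)%N.   (* dimension of [w_{k|t}; n_{k|t}] *)

(* v_t = [w_{t|t}; n_{t|t}; ...; w_{t+N-1|t}; n_{t+N-1|t}] ; relative step s *)
Definition vstep (v : 'cV[R]_(N * D)) (s : nat) : 'cV[R]_D :=
  \col_j (if (insub s : option 'I_N) is Some k then v (mxvec_index k j) 0 else 0).

Definition wn (v : 'cV[R]_(N * D)) (s : nat) : 'cV[R]_nx := usubmx (vstep v s).
Definition nstack (v : 'cV[R]_(N * D)) (s : nat) : 'cV[R]_(M * nn) :=
  dsubmx (vstep v s).
Definition nobs (v : 'cV[R]_(N * D)) (s : nat) (i : 'I_M) : 'cV[R]_nn :=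
  block (nstack v s) i.

Definition wn_all (v : 'cV[R]_(N * D)) : 'cV[R]_(N * nx + N * (M * nn)) :=
  col_mx (stack (fun s : 'I_N => wn v s)) (stack (fun s : 'I_N => nstack v s)).

Fixpoint obs (v : 'cV[R]_(N * D)) (s : nat) (i : 'I_M) : 'cV[R]_nx :=
  match s with
  | 0 => ot sys i
  | s'.+1 => T sys (t + s') i *m obs v s' i + q sys (t + s') i
             + F sys (t + s') i *m nobs v s' i
  end.

Fixpoint obsbar (s : nat) (i : 'I_M) : 'cV[R]_nx :=
  match s with
  | 0 => ot sys i
  | s'.+1 => T sys (t + s') i *m obsbar s' i + q sys (t + s') i
  end.

Definition u (v : 'cV[R]_(N * D)) (s : nat) : 'cV[R]_nu :=
  h th (t + s) + \sum_(l < s) Mg th (t + l) (t + s) *m wn v l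
  + Kg th (t + s) *m (stack (fun i => obs v s i) - stack (fun i => obsbar s i)).

Fixpoint x (v : 'cV[R]_(N * D)) (s : nat) : 'cV[R]_nx :=
  match s with
  | 0 => xt sys
  | s'.+1 => A sys (t + s') *m x v s' + B sys (t + s') *m u v s'
             + E sys (t + s') *m wn v s'
  end.

Fixpoint xbar (s : nat) : 'cV[R]_nx :=
  match s with
  | 0 => xt sys
  | s'.+1 => A sys (t + s') *m xbar s' + B sys (t + s') *m h th (t + s')
  end.

Variables (n l J : nat).
Record geometry := Geometry {
  K : set 'cV[R]_l;
  G : 'M[R]_(l, n);
  g : 'cV[R]_l;
  Gi : 'I_M -> 'M[R]_(l, n);
  gi : 'I_M -> 'cV[R]_l;
  Rk : nat -> 'M[R]_n;
  Rik : nat -> 'I_M -> 'M[R]_n;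
  C : 'M[R]_(n, nx);
  ct : 'cV[R]_n;
  Fx : 'I_J -> 'rV[R]_nx;
  Fu : 'I_J -> 'rV[R]_nu;
  f : 'I_J -> R
}.

Variables (geo : geometry) (lam nud : nat -> 'I_M -> 'cV[R]_l). (* absolute k *)

(* structural (noise-independent) dual constraints at absolute time k *)
Definition dual_ok (k : nat) (i : 'I_M) : Prop :=
  dual_cone (K geo) (lam k i) /\ dual_cone (K geo) (nud k i) /\
  norm2 ((lam k i)^T *m G geo *m (Rk geo k)^T) <= 1 /\
  (lam k i)^T *m G geo *m (Rk geo k)^T = - ((nud k i)^T *m Gi geo i *m (Rik geo k i)^T).

Definition CA (v : 'cV[R]_(N * D)) : Prop :=
  forall (s : 'I_N) (i : 'I_M),
    dual_ok (t + s.+1) i /\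
    ((lam (t + s.+1) i)^T *m (G geo *m (Rk geo (t + s.+1))^T
        *m (C geo *m (x v s.+1 - obs v s.+1 i) + ct geo) + g geo)) 0 0
    < - ((nud (t + s.+1) i)^T *m gi geo i) 0 0.

Definition XU (v : 'cV[R]_(N * D)) : Prop :=
  forall (s : 'I_N) (j : 'I_J),
    (Fx geo j *m x v s.+1 + Fu geo j *m u v s) 0 0 <= f geo j.

Definition Y (s : nat) (i : 'I_M) : R :=
  let k := (t + s)%N in
  - ((lam k i)^T *m g geo) 0 0 - ((nud k i)^T *m gi geo i) 0 0
  - ((lam k i)^T *m G geo *m (Rk geo k)^T *m ct geo) 0 0
  - ((lam k i)^T *m G geo *m (Rk geo k)^T *m C geo *m (xbar s - obsbar s i)) 0 0.

Definition Ybar (s : nat) (j : 'I_J) : R :=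
  f geo j - (Fx geo j *m xbar s.+1) 0 0 - (Fu geo j *m h th (t + s)) 0 0.

Definition is_Z (s : nat) (i : 'I_M) (Z : 'rV[R]_(N * nx + N * (M * nn))) : Prop :=
  let k := (t + s)%N in
  forall v : 'cV[R]_(N * D),
    (lam k i)^T *m G geo *m (Rk geo k)^T *m C geo *m (x v s - obs v s i)
    = (lam k i)^T *m G geo *m (Rk geo k)^T *m C geo *m (xbar s - obsbar s i)
      + Z *m wn_all v.

Definition is_Zbar (s : nat) (j : 'I_J) (Z : 'rV[R]_(N * nx + N * (M * nn))) : Prop :=
  forall v : 'cV[R]_(N * D),
    Fx geo j *m x v s.+1 + Fu geo j *m u v s
    = Fx geo j *m xbar s.+1 + Fu geo j *m h th (t + s) + Z *m wn_all v.

End Defs.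

(* For fixed dual multipliers, every constraint of (CA) and (XU) is affine in
   the stacked noise: moving the noise-free part to the right, it reads
   [a v < Y] with [a = Z P] (collision avoidance) or [a v <= Ybar] with
   [a = Zb P] (state and input constraints).
   1) Over the box [|Gamma v|_oo <= gamma] the largest value of [a v] is
      [gamma |a Gamma^-1|_1], attained at a sign vector (l1/loo duality).
   2), 3) By the union bound over the [N M + N J] affine events, it suffices
      that each collision event has probability at most [eps / 2NM] and each
      state/input event at most [eps / 2NJ].  The scalar [a v] has mean 0 and
      standard deviation [|a Sigma^1/2|_2]; for Gaussian noise it is a centred
      normal variable, which gives the quantile condition, and for an arbitrary
      law Cantelli's one-sided inequality [P(a v >= y) <= s^2 / (s^2 + y^2)]
      gives the bound [eps / K] ([K = 2NM] or [2NJ]) as soon as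
      [y >= sqrt((K - eps) / eps) s]. *)

From HB Require Import structures.
From mathcomp Require Import all_boot all_order all_algebra.
From mathcomp Require Import all_classical all_reals all_analysis.
From mathcomp Require Import ring lra measurable_realfun.
Import Order.TTheory GRing.Theory Num.Theory.
Set Implicit Arguments.
Unset Strict Implicit.
Unset Printing Implicit Defensive.
Local Open Scope classical_set_scope.
Local Open Scope ring_scope.

Lemma unidx_mxvec_index m n (i : 'I_m) (j : 'I_n) : unidx (mxvec_index i j) = (i, j).
Proof. by rewrite /unidx /mxvec_index cast_ordK enum_rankK. Qed.

Lemma unidx_inj m n : injective (@unidx m n).
Proof. by move=> a b /enum_val_inj /cast_ord_inj. Qed.

Section Kronecker.
Variables (R : realType) (k p : nat).
Local Notation kron1 := (kron (1%:M : 'M[R]_k)).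

Lemma mul_kron1 (A B : 'M[R]_p) : kron1 A *m kron1 B = kron1 (A *m B).
Proof.
apply/matrixP => a b; rewrite !mxE.
rewrite (reindex (fun x : 'I_k * 'I_p => mxvec_index x.1 x.2)) /=; last first.
  exists (@unidx k p) => [[i j] _|c _]; first by rewrite unidx_mxvec_index.
  by case/mxvec_indexP: c => i j; rewrite unidx_mxvec_index.
rewrite -(pair_bigA _ (fun i j =>
  kron1 A a (mxvec_index i j) * kron1 B (mxvec_index i j) b)) /=.
rewrite (bigD1 (unidx a).1) //= [X in _ + X]big1 ?addr0 => [|i ne_ia].
  rewrite big_distrr /=; apply: eq_bigr => j _.
  by rewrite !mxE !unidx_mxvec_index /= eqxx mul1r; ring.
by rewrite big1 // => j _; rewrite !mxE unidx_mxvec_index /= eq_sym (negbTE ne_ia) !mul0r.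
Qed.

Lemma kron1_id : kron1 (1%:M : 'M[R]_p) = 1%:M.
Proof.
apply/matrixP => a b; rewrite !mxE -natrM -(inj_eq (@unidx_inj k p)).
by case: (unidx a) (unidx b) => i j [i' j']; rewrite xpair_eqE; case: (i == i'); case: (j == j').
Qed.

Lemma kron1_unitmx (A : 'M[R]_p) : A \in unitmx -> kron1 A \in unitmx.
Proof.
move=> uA; suff /mulmx1_unit[] : kron1 A *m kron1 (invmx A) = 1%:M by [].
by rewrite mul_kron1 mulmxV // kron1_id.
Qed.

End Kronecker.

Section Norms.
Variables (R : realType) (m : nat).
Implicit Types (c : 'rV[R]_m) (d : 'cV[R]_m) (gam : R).

Lemma norminf_ge0 d : 0 <= norminf d.
Proof. by rewrite /norminf; elim/big_ind: _ => // a b a_ge0 _; rewrite le_max a_ge0. Qed.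

Lemma norminf_leP d gam : 0 <= gam ->
  norminf d <= gam <-> forall j, `|d j 0| <= gam.
Proof.
move=> gam_ge0; split => [dle j|dle].
  by apply: le_trans dle; rewrite /norminf (bigD1 j) //= le_max lexx.
by rewrite /norminf; elim/big_ind: _ => // a b ha hb; rewrite ge_max ha hb.
Qed.

Lemma mulmx_le_norm1 c d gam : norminf d <= gam -> (c *m d) 0 0 <= gam * norm1 c.
Proof.
move=> dle; have gam_ge0 := le_trans (norminf_ge0 d) dle.
have {}dle := (norminf_leP d gam_ge0).1 dle.
rewrite mxE /norm1 mulr_sumr; apply: ler_sum => j _.
by rewrite (le_trans (ler_norm _)) // normrM mulrC ler_wpM2r.
Qed.

Lemma norm1_attained c gam : 0 <= gam ->
  exists2 d, norminf d <= gam & (c *m d) 0 0 = gam * norm1 c.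
Proof.
move=> gam_ge0; exists (\col_j (if 0 <= c 0 j then gam else - gam)).
  by apply/norminf_leP => // j; rewrite mxE; case: ifP; rewrite ?normrN ger0_norm.
rewrite mxE /norm1 mulr_sumr; apply: eq_bigr => j _; rewrite mxE.
case: ifPn => [c_ge0|]; first by rewrite ger0_norm // mulrC.
by rewrite -ltNge => c_lt0; rewrite ltr0_norm // mulrN mulrC mulrN.
Qed.

Lemma box_linear_le c (G : 'M[R]_m) v gam : G \in unitmx ->
  norminf (G *m v) <= gam -> (c *m v) 0 0 <= gam * norm1 (c *m invmx G).
Proof.
by move=> uG /(mulmx_le_norm1 (c *m invmx G)); rewrite -mulmxA mulKmx.
Qed.

Lemma box_linear_attained c (G : 'M[R]_m) gam : G \in unitmx -> 0 <= gam ->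
  exists2 v, norminf (G *m v) <= gam & (c *m v) 0 0 = gam * norm1 (c *m invmx G).
Proof.
move=> uG /(norm1_attained (c *m invmx G)) [e ele <-].
by exists (invmx G *m e); rewrite ?mulKVmx // mulmxA.
Qed.

Lemma norm2_sqr c : norm2 c ^+ 2 = (c *m c^T) 0 0.
Proof.
rewrite /norm2 sqr_sqrtr ?sumr_ge0 // => [|j _]; last exact: sqr_ge0.
by rewrite mxE; apply: eq_bigr => j _; rewrite mxE expr2.
Qed.

Lemma quad_form_sqrt_factor c (S Sb : 'M[R]_m) : S^T = S -> S *m S = Sb ->
  (c *m Sb *m c^T) 0 0 = norm2 (c *m S) ^+ 2.
Proof. by move=> S_sym <-; rewrite norm2_sqr trmx_mul S_sym !mulmxA. Qed.

End Norms.

Section Probability.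
Context d (T : measurableType d) (R : realType) (Pr : probability T R).
Implicit Types (f : T -> R) (A B : set T) (q r : R).

Lemma measurable_fun_le_set f r : measurable_fun setT f -> measurable [set w | f w <= r].
Proof. by move=> mf; rewrite -preimage_itvNyc -[_ @^-1` _]setTI; exact: mf. Qed.

Lemma measurable_fun_ge_set f r : measurable_fun setT f -> measurable [set w | r <= f w].
Proof. by move=> mf; rewrite -preimage_itvcy -[_ @^-1` _]setTI; exact: mf. Qed.

Lemma measurable_fun_gt_set f r : measurable_fun setT f -> measurable [set w | r < f w].
Proof. by move=> mf; rewrite -preimage_itvoy -[_ @^-1` _]setTI; exact: mf. Qed.

Local Open Scope ereal_scope.

Lemma probability_setC_ge A q : measurable A -> Pr A <= q%:E -> (1 - q)%:E <= Pr (~` A).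
Proof.
move=> mA; rewrite probability_setC // -(fineK (fin_num_measure Pr _ mA)).
by rewrite -EFinB !lee_fin => ?; lra.
Qed.

Lemma probability_le_setC A B q : measurable A -> measurable B -> A `<=` ~` B ->
  (1 - q)%:E <= Pr B -> Pr A <= q%:E.
Proof.
move=> mA mB AB PB; have PA : Pr A <= Pr (~` B).
  by apply: le_measure; rewrite ?inE //; exact: measurableC.
apply: le_trans PA _; move: PB; rewrite probability_setC //.
by rewrite -(fineK (fin_num_measure Pr _ mB)) -EFinB !lee_fin => ?; lra.
Qed.

Lemma measure_bigsetU_le (I : Type) (s : seq I) (B : I -> set T) (p : I -> R) :
  (forall k, measurable (B k)) -> (forall k, Pr (B k) <= (p k)%:E) ->
  Pr (\big[setU/set0]_(k <- s) B k) <= (\sum_(k <- s) p k)%:E.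
Proof.
move=> mB PB; elim: s => [|k s IH]; first by rewrite !big_nil measure0.
rewrite !big_cons EFinD (le_trans (measureU2 _ _ _)) ?leeD ?PB //.
exact: bigsetU_measurable.
Qed.

Lemma union_bound (I : finType) (B : I -> set T) (p : I -> R) :
  (forall k, measurable (B k)) -> (forall k, Pr (B k) <= (p k)%:E) ->
  (1 - \sum_k p k)%:E <= Pr [set w | forall k, ~ B k w].
Proof.
move=> mB PB; have mU : measurable (\big[setU/set0]_(k <- index_enum I) B k).
  exact: bigsetU_measurable.
have -> : [set w | forall k, ~ B k w] = ~` \big[setU/set0]_(k <- index_enum I) B k.
  rewrite -bigcup_seq; apply/seteqP; split => w /= nB; first by case=> k _ /nB.
  by move=> k Bk; apply: nB; exists k; rewrite //= mem_index_enum.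
exact/probability_setC_ge/measure_bigsetU_le.
Qed.

End Probability.

Section SecondMoments.
Context d (T : measurableType d) (R : realType) (Pr : probability T R).
Implicit Types (f : T -> R).

Lemma sqr_integrable_Lfun2 f : measurable_fun setT f ->
  Pr.-integrable setT (fun w => (f w ^+ 2)%:E) -> f \in Lfun Pr 2%:E.
Proof.
move=> mf /integrableP[_ f2_fin]; rewrite inE; apply/andP; split; rewrite inE //=.
rewrite /finite_norm (@lty_poweRy _ _ 2) // poweR_Lnorm //.
by under eq_integral do rewrite compE abse_EFin poweR_EFin powR_mulrn // -normrX.
Qed.

Lemma integral_lincomb (I : finType) (c e : I -> R) (F : I -> T -> R) :
  (forall i, Pr.-integrable setT (fun w => (F i w)%:E)) ->
  (forall i, \int[Pr]_w (F i w)%:E = (e i)%:E)%E ->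
  Pr.-integrable setT (fun w => (\sum_i c i * F i w)%:E) /\
  (\int[Pr]_w (\sum_i c i * F i w)%:E = (\sum_i c i * e i)%:E)%E.
Proof.
move=> iF eF; have icF i : Pr.-integrable setT (fun w => (c i * F i w)%:E).
  by under eq_fun do rewrite EFinM; exact: integrableZl.
split; first by under eq_fun do rewrite -sumEFin; exact: integrable_sum.
under eq_integral do rewrite -sumEFin.
rewrite integral_sum // -sumEFin; apply: eq_bigr => i _.
by under eq_integral do rewrite EFinM; rewrite integralZl // eF -EFinM.
Qed.

Lemma measurable_linear_functional m (V : T -> 'cV[R]_m) (a : 'rV[R]_m) :
  (forall r, measurable_fun setT (fun w => V w r ord0)) ->
  measurable_fun setT (fun w => (a *m V w) 0 0).
Proof.
move=> mV; apply: (eq_measurable_fun (fun w => \sum_j a 0 j * V w j ord0)) => [w _|].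
  by rewrite mxE.
by apply: measurable_sum => j; exact: measurable_funM.
Qed.

Lemma linear_functional_moments m (V : T -> 'cV[R]_m) (S : 'M[R]_m) (a : 'rV[R]_m) :
  (forall r, Pr.-integrable setT (fun w => (V w r ord0)%:E)) ->
  (forall r, 'E_Pr[fun w => V w r ord0] = 0)%E ->
  (forall r r', Pr.-integrable setT (fun w => (V w r ord0 * V w r' ord0)%:E)) ->
  (forall r r', 'E_Pr[fun w => (V w r ord0 * V w r' ord0)%R] = (S r r')%:E)%E ->
  let X w := (a *m V w) 0 0 in
  [/\ Pr.-integrable setT (fun w => (X w ^+ 2)%:E),
      (\int[Pr]_w (X w)%:E = 0)%E & (\int[Pr]_w (X w ^+ 2)%:E = ((a *m S *m a^T) 0 0)%:E)%E].
Proof.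
move=> iV EV iVV EVV X; rewrite unlock in EV EVV.
have XE w : X w = \sum_j a 0 j * V w j ord0 by rewrite /X mxE.
have X2E w : X w ^+ 2 = \sum_j \sum_k (a 0 j * a 0 k) * (V w j ord0 * V w k ord0).
  rewrite XE expr2 mulr_suml; apply: eq_bigr => j _.
  by rewrite mulr_sumr; apply: eq_bigr => k _ /=; ring.
have aSa : (a *m S *m a^T) 0 0 = \sum_j \sum_k (a 0 j * a 0 k) * S j k.
  rewrite mxE; under eq_bigr do rewrite mxE mulr_suml.
  rewrite exchange_big; apply: eq_bigr => j _; apply: eq_bigr => k _.
  by rewrite !mxE; ring.
have [_ EX] := integral_lincomb (a 0) iV EV.
have [iX2 EX2] := integral_lincomb (fun jk : 'I_m * 'I_m => a 0 jk.1 * a 0 jk.2)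
  (fun jk => iVV jk.1 jk.2) (fun jk => EVV jk.1 jk.2).
split.
- by under eq_fun do rewrite X2E pair_bigA.
- by under eq_integral do rewrite XE; rewrite EX big1 // => j _; rewrite mulr0.
- by under eq_integral do rewrite X2E pair_bigA; rewrite EX2 aSa pair_bigA.
Qed.

Lemma cantelli_centered f s2 lam : measurable_fun setT f ->
  Pr.-integrable setT (fun w => (f w ^+ 2)%:E) ->
  (\int[Pr]_w (f w)%:E = 0)%E -> (\int[Pr]_w (f w ^+ 2)%:E = s2%:E)%E -> 0 < lam ->
  (Pr [set w | (lam <= f w)%R] <= (s2 / (s2 + lam ^+ 2))%:E)%E.
Proof.
move=> mf f2 Ef Ef2 lam_gt0; have fL2 := sqr_integrable_Lfun2 mf f2.
have Ef' : ('E_Pr[f] = 0)%E by rewrite unlock.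
have Vf : ('V_Pr[f] = s2%:E)%E.
  rewrite varianceE // Ef' expe2 mule0 sube0 unlock -Ef2.
  by apply: eq_integral => w _; rewrite exprfctE.
have fm : f \in mfun by rewrite inE.
have -> : [set w | (lam <= f w)%R] = [set w | (lam%:E <= (f w)%:E - 'E_Pr[f])%E].
  by rewrite Ef'; apply/seteqP; split => w /=; rewrite sube0 lee_fin.
by have := cantelli (X := mfun_Sub fm) fL2 lam_gt0; rewrite Vf.
Qed.

Lemma sqr_integral0_pos_null f : measurable_fun setT f ->
  (\int[Pr]_w (f w ^+ 2)%:E = 0)%E -> Pr [set w | 0 < f w] = 0%E.
Proof.
move=> mf Ef2; have mf2 : measurable_fun setT (fun w => (f w ^+ 2)%:E).
  by apply/measurable_EFinP; exact: measurable_funX.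
have [|N [mN PN0 sub]] := (ae_eq_integral_abs Pr measurableT mf2).1.
  by under eq_integral do rewrite gee0_abs ?lee_fin ?sqr_ge0 //=.
apply: subset_measure0 PN0 => //; first exact: measurable_fun_gt_set.
move=> w /= f_gt0; apply: sub => /(_ I) /eqP.
by rewrite eqe sqrf_eq0 gt_eqF.
Qed.

End SecondMoments.

Lemma cantelli_ratio_le (R : realType) (K eps sig y : R) : 0 < eps -> eps < K ->
  0 <= sig -> Num.sqrt ((K - eps) / eps) * sig <= y -> 0 < y ->
  sig ^+ 2 / (sig ^+ 2 + y ^+ 2) <= eps / K.
Proof.
move=> eps_gt0 eps_ltK sig_ge0 yle y_gt0.
have c_ge0 : 0 <= (K - eps) / eps by rewrite divr_ge0 // ?subr_ge0 ltW.
have c_eps : (K - eps) / eps * eps = K - eps by rewrite mulfVK // gt_eqF.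
have sig_y : (K - eps) / eps * sig ^+ 2 <= y ^+ 2.
  by rewrite -[_ / eps]sqr_sqrtr // -exprMn ler_sqr
    ?nnegrE ?(ltW y_gt0) ?mulr_ge0 ?sqrtr_ge0.
rewrite ler_pdivrMr ?ltr_wpDl ?sqr_ge0 ?exprn_gt0 //.
rewrite mulrAC ler_pdivlMr ?(lt_trans eps_gt0) //.
set c := (K - eps) / eps in c_eps sig_y c_ge0; nra.
Qed.

Section Tails.
Context d (T : measurableType d) (R : realType) (Pr : probability T R).
Variables (m : nat) (V : T -> 'cV[R]_m) (Sb S12 : 'M[R]_m).
Hypothesis mV : forall r, measurable_fun setT (fun w => V w r ord0).
Hypotheses (S12_sym : S12^T = S12) (S12_sqr : S12 *m S12 = Sb).

Section Gaussian.
Hypothesis V_gauss : forall (a : 'rV[R]_m) (r : R),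
  Pr [set w | (a *m V w) 0 0 <= r] = (gauss_cdf (Num.sqrt ((a *m Sb *m a^T) 0 0)) r)%:E.
Variables (a : 'rV[R]_m) (gam q y : R).
Hypotheses (q_ge0 : 0 <= q) (Phi_gam : Phi gam = 1 - q).

Lemma gaussian_quantile_bound :
  ((1 - q)%:E <= Pr [set w | ((a *m V w) 0 0 <= gam * norm2 (a *m S12))%R])%E.
Proof.
rewrite V_gauss (quad_form_sqrt_factor a S12_sym S12_sqr) sqrtr_sqr.
rewrite ger0_norm ?lee_fin /gauss_cdf; last exact: sqrtr_ge0.
case: ifPn => [sig_gt0|]; first by rewrite mulfK ?gt_eqF // Phi_gam.
rewrite lt_def negb_and negbK sqrtr_ge0 orbF => /eqP ->.
by rewrite mulr0 lexx gerBl.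
Qed.

Lemma gaussian_tail_ge : gam * norm2 (a *m S12) < y ->
  (Pr [set w | (y <= (a *m V w) 0 0)%R] <= q%:E)%E.
Proof.
move=> ylt; apply: probability_le_setC gaussian_quantile_bound.
- exact: measurable_fun_ge_set (measurable_linear_functional a mV).
- exact: measurable_fun_le_set (measurable_linear_functional a mV).
- by move=> w /= yle; apply/negP; rewrite -ltNge (lt_le_trans ylt yle).
Qed.

Lemma gaussian_tail_gt : gam * norm2 (a *m S12) <= y ->
  (Pr [set w | (y < (a *m V w) 0 0)%R] <= q%:E)%E.
Proof.
move=> yle; apply: probability_le_setC gaussian_quantile_bound.
- exact: measurable_fun_gt_set (measurable_linear_functional a mV).
- exact: measurable_fun_le_set (measurable_linear_functional a mV).
- by move=> w /= ylt; apply/negP; rewrite -ltNge (le_lt_trans yle ylt).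
Qed.

End Gaussian.

Section DistributionallyRobust.
Hypotheses (iV : forall r, Pr.-integrable setT (fun w => (V w r ord0)%:E))
  (EV : forall r, ('E_Pr[fun w => V w r ord0] = 0)%E)
  (iVV : forall r r', Pr.-integrable setT (fun w => ((V w r ord0 * V w r' ord0)%R)%:E))
  (EVV : forall r r', ('E_Pr[fun w => (V w r ord0 * V w r' ord0)%R] = (Sb r r')%:E)%E).
Variables (a : 'rV[R]_m) (K eps y : R).
Hypotheses (eps_gt0 : 0 < eps) (eps_ltK : eps < K).

Local Notation X w := ((a *m V w) 0 0).
Let sig := norm2 (a *m S12).
Let sig_ge0 : 0 <= sig. Proof. exact: sqrtr_ge0. Qed.

Let X_moments :
  [/\ measurable_fun setT (fun w => X w), Pr.-integrable setT (fun w => (X w ^+ 2)%:E),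
       (\int[Pr]_w (X w)%:E = 0)%E & (\int[Pr]_w (X w ^+ 2)%:E = (sig ^+ 2)%:E)%E].
Proof.
have [iX2 EX EX2] := linear_functional_moments a iV EV iVV EVV.
split => //; first exact: measurable_linear_functional.
by rewrite EX2 (quad_form_sqrt_factor a S12_sym S12_sqr).
Qed.

Lemma cantelli_tail_ge : Num.sqrt ((K - eps) / eps) * sig < y ->
  (Pr [set w | (y <= X w)%R] <= (eps / K)%:E)%E.
Proof.
move=> ylt; have [mX iX2 EX EX2] := X_moments.
have y_gt0 : 0 < y by apply: le_lt_trans ylt; rewrite mulr_ge0 ?sqrtr_ge0.
apply: le_trans (cantelli_centered mX iX2 EX EX2 y_gt0) _.
by rewrite lee_fin cantelli_ratio_le // ltW.
Qed.

Lemma cantelli_tail_gt : Num.sqrt ((K - eps) / eps) * sig <= y ->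
  (Pr [set w | (y < X w)%R] <= (eps / K)%:E)%E.
Proof.
move=> yle; have [mX iX2 EX EX2] := X_moments.
have [y_gt0|y_le0] := ltP 0 y.
  have sub : (Pr [set w | (y < X w)%R] <= Pr [set w | (y <= X w)%R])%E.
    apply: le_measure => [||w /ltW //]; rewrite inE.
      exact: measurable_fun_gt_set.
    exact: measurable_fun_ge_set.
  apply: le_trans sub (le_trans (cantelli_centered mX iX2 EX EX2 y_gt0) _).
  by rewrite lee_fin cantelli_ratio_le.
(* For [y <= 0] the variance vanishes and [X] is almost surely [0]. *)
have gam_gt0 : 0 < Num.sqrt ((K - eps) / eps) by rewrite sqrtr_gt0 divr_gt0 ?subr_gt0.
have sig0 : sig = 0.
  apply/eqP; rewrite eq_le sig_ge0 andbT -(pmulr_rle0 _ gam_gt0).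
  exact: le_trans yle y_le0.
have -> : y = 0 by apply/eqP; rewrite eq_le y_le0 (le_trans _ yle) // sig0 mulr0.
rewrite sig0 expr0n /= in EX2; rewrite (sqr_integral0_pos_null mX EX2) lee_fin.
by rewrite divr_ge0 // ltW // (lt_trans eps_gt0).
Qed.

End DistributionallyRobust.

End Tails.

Lemma split_budget (R : realType) (eps : R) (K L : nat) : (0 < K)%N -> (0 < L)%N ->
  eps / (2 * K * L)%:R *+ (K * L) = eps / 2.
Proof.
move=> K_gt0 L_gt0; rewrite -mulr_natr !natrM.
by field; rewrite !pnatr_eq0 -!lt0n K_gt0 L_gt0.
Qed.

Lemma risk_share_bounds (R : realType) (K L : nat) (eps : R) :
  (0 < K)%N -> (0 < L)%N -> 0 < eps < 1 ->
  0 <= eps / (2 * K * L)%:R /\ eps < (2 * K * L)%:R.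
Proof.
move=> K_gt0 L_gt0 /andP[eps_gt0 eps_lt1]; split; first by rewrite divr_ge0 // ltW.
by rewrite (lt_le_trans eps_lt1) // ler1n !muln_gt0 K_gt0 L_gt0.
Qed.

Section ChanceConstraints.
Variables (R : realType) (nx nu nn M N J n l t : nat).
Hypotheses (HN : (0 < N)%N) (HM : (0 < M)%N) (HJ : (0 < J)%N).
Variables (sys : dynamics R nx nu nn M) (th : policy R nx nu M).
Variables (geo : geometry R nx nu M n l J) (lam nud : nat -> 'I_M -> 'cV[R]_l).
Variable P : 'M[R]_(N * nx + N * (M * nn), N * D nx nn M).
Hypothesis HP : forall v, wn_all v = P *m v.
Variable Z : nat -> 'I_M -> 'rV[R]_(N * nx + N * (M * nn)).
Hypothesis HZ : forall (s : 'I_N) (i : 'I_M), is_Z t sys th geo lam s.+1 i (Z s.+1 i).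
Variable Zb : nat -> 'I_J -> 'rV[R]_(N * nx + N * (M * nn)).
Hypothesis HZb : forall (s : 'I_N) (j : 'I_J), is_Zbar t sys th geo s j (Zb s j).

Let i0 : 'I_M := Ordinal HM.
Let j0 : 'I_J := Ordinal HJ.

Lemma CA_iff_affine (v : 'cV[R]_(N * D nx nn M)) :
  (forall (s : 'I_N) (i : 'I_M), dual_ok geo lam nud (t + s.+1) i) ->
  CA t sys th geo lam nud v <->
  forall (s : 'I_N) (i : 'I_M), (Z s.+1 i *m P *m v) 0 0 < Y t sys th geo lam nud s.+1 i.
Proof.
move=> duals; have ca_iff (s : 'I_N) i :
    ((lam (t + s.+1) i)^T *m (G geo *m (Rk geo (t + s.+1))^T
      *m (C geo *m (x t sys th v s.+1 - obs t sys v s.+1 i) + ct geo) + g geo)) 0 0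
      < - ((nud (t + s.+1) i)^T *m gi geo i) 0 0
    <-> (Z s.+1 i *m P *m v) 0 0 < Y t sys th geo lam nud s.+1 i.
  move: (HZ s i v); move: (x t sys th v s.+1 - obs t sys v s.+1 i) => d Zd.
  rewrite !mulmxDr !mulmxA Zd HP (mulmxA (Z s.+1 i) P v) /Y !mxE.
  by split; lra.
split=> [CAv s i | H s i]; first by apply/ca_iff; case: (CAv s i).
by split; last apply/ca_iff.
Qed.

Lemma XU_iff_affine (v : 'cV[R]_(N * D nx nn M)) :
  XU t sys th geo v <->
  forall (s : 'I_N) (j : 'I_J), (Zb s j *m P *m v) 0 0 <= Ybar t sys th geo s j.
Proof.
have xu_iff (s : 'I_N) j :
    (Fx geo j *m x t sys th v s.+1 + Fu geo j *m u t sys th v s) 0 0 <= f geo j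
    <-> (Zb s j *m P *m v) 0 0 <= Ybar t sys th geo s j.
  by rewrite (HZb s j v) HP /Ybar mulmxA !mxE; split; lra.
by split=> H s j; apply/xu_iff; exact: H.
Qed.

Lemma robust_feasibility_iff (Gam : 'M[R]_(D nx nn M)) (gam : R) :
  Gam \in unitmx -> 0 < gam ->
  let Gamb := kron (1%:M : 'M[R]_N) Gam in
  (forall v : 'cV[R]_(N * D nx nn M), norminf (Gamb *m v) <= gam ->
     CA t sys th geo lam nud v /\ XU t sys th geo v)
  <->
  (forall (s : 'I_N) (i : 'I_M) (j : 'I_J),
     dual_ok geo lam nud (t + s.+1) i /\
     Y t sys th geo lam nud s.+1 i > gam * norm1 (Z s.+1 i *m P *m invmx Gamb) /\
     Ybar t sys th geo s j - gam * norm1 (Zb s j *m P *m invmx Gamb) >= 0).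
Proof.
move=> uGam gam_gt0 Gamb; have uGamb : Gamb \in unitmx by exact: kron1_unitmx.
split=> [robust | H v vle].
  have duals (s : 'I_N) i : dual_ok geo lam nud (t + s.+1) i.
    have v0 : norminf (Gamb *m 0) <= gam.
      by apply/(norminf_leP _ (ltW gam_gt0)) => j; rewrite mulmx0 mxE normr0 ltW.
    by case: ((robust 0 v0).1 s i).
  move=> s i j; split=> //; split.
    have [v vle <-] := box_linear_attained (Z s.+1 i *m P) uGamb (ltW gam_gt0).
    exact: (CA_iff_affine v duals).1 (robust v vle).1 s i.
  have [v vle <-] := box_linear_attained (Zb s j *m P) uGamb (ltW gam_gt0).
  by rewrite subr_ge0; exact: (XU_iff_affine v).1 (robust v vle).2 s j.
have duals (s : 'I_N) i : dual_ok geo lam nud (t + s.+1) i by case: (H s i j0).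
split; [apply/(CA_iff_affine v duals) => s i | apply/XU_iff_affine => s j].
  by apply: le_lt_trans (box_linear_le _ uGamb vle) _; case: (H s i j0) => _ [].
apply: le_trans (box_linear_le _ uGamb vle) _.
by case: (H s i0 j) => _ [_]; rewrite subr_ge0.
Qed.

Lemma chance_constraints_bound d (Om : measurableType d) (Pr : probability Om R)
    (V : Om -> 'cV[R]_(N * D nx nn M)) (S12 : 'M[R]_(N * D nx nn M)) (eps gca gxu : R) :
  (forall r, measurable_fun setT (fun w => V w r ord0)) ->
  (forall (a : 'rV[R]_(N * D nx nn M)) (y : R), gca * norm2 (a *m S12) < y ->
     (Pr [set w | (y <= (a *m V w) 0 0)%R] <= (eps / (2 * N * M)%:R)%:E)%E) ->
  (forall (a : 'rV[R]_(N * D nx nn M)) (y : R), gxu * norm2 (a *m S12) <= y ->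
     (Pr [set w | (y < (a *m V w) 0 0)%R] <= (eps / (2 * N * J)%:R)%:E)%E) ->
  (forall (s : 'I_N) (i : 'I_M) (j : 'I_J),
     dual_ok geo lam nud (t + s.+1) i /\
     Y t sys th geo lam nud s.+1 i > gca * norm2 (Z s.+1 i *m P *m S12) /\
     Ybar t sys th geo s j >= gxu * norm2 (Zb s j *m P *m S12)) ->
  ((1 - eps)%:E <= Pr [set w | CA t sys th geo lam nud (V w) /\ XU t sys th geo (V w)])%E.
Proof.
move=> mV tail_ca tail_xu H.
have duals (s : 'I_N) i : dual_ok geo lam nud (t + s.+1) i by case: (H s i j0).
pose B (k : 'I_N * 'I_M + 'I_N * 'I_J) : set Om :=
  match k with
  | inl (s, i) => [set w | (Y t sys th geo lam nud s.+1 i <= (Z s.+1 i *m P *m V w) 0 0)%R]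
  | inr (s, j) => [set w | (Ybar t sys th geo s j < (Zb s j *m P *m V w) 0 0)%R]
  end.
pose p (k : 'I_N * 'I_M + 'I_N * 'I_J) : R :=
  if k is inl _ then eps / (2 * N * M)%:R else eps / (2 * N * J)%:R.
have mB k : measurable (B k).
  case: k => -[s i]; [apply: measurable_fun_ge_set | apply: measurable_fun_gt_set];
  exact: measurable_linear_functional.
have PB k : (Pr (B k) <= (p k)%:E)%E.
  case: k => -[s i]; first by apply: tail_ca; case: (H s i j0) => _ [].
  by apply: tail_xu; case: (H s i0 i) => _ [].
have sum_p : \sum_k p k = eps.
  by rewrite big_sumType /= !sumr_const !card_prod !card_ord !split_budget // -splitr.
have -> : [set w | CA t sys th geo lam nud (V w) /\ XU t sys th geo (V w)] =
          [set w | forall k, ~ B k w].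
  apply/seteqP; split=> w /=.
    case=> /(CA_iff_affine _ duals) ca /XU_iff_affine xu [[s i]|[s j]] /=; apply/negP.
      by rewrite -ltNge ca.
    by rewrite -leNgt xu.
  move=> noB; split; [apply/(CA_iff_affine _ duals) => s i | apply/XU_iff_affine => s j].
    by rewrite ltNge; apply/negP; exact: noB (inl (s, i)).
  by rewrite leNgt; apply/negP; exact: noB (inr (s, j)).
by rewrite -sum_p; exact: union_bound.
Qed.

End ChanceConstraints.

Unset Implicit Arguments.

Theorem theorem1
  (R : realType) (nx nu nn M N J n l t : nat)
  (HN : (0 < N)%N) (HM : (0 < M)%N) (HJ : (0 < J)%N)
  (sys : dynamics R nx nu nn M) (th : policy R nx nu M)
  (geo : geometry R nx nu M n l J) (lam nud : nat -> 'I_M -> 'cV[R]_l)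
  (HK : proper_cone (K geo))
  (HR : forall k, rotation (Rk geo k))
  (HRi : forall k i, rotation (Rik geo k i))
  (P : 'M[R]_(N * nx + N * (M * nn), N * D nx nn M))
  (HP : forall v : 'cV[R]_(N * D nx nn M), wn_all v = P *m v)
  (Z : nat -> 'I_M -> 'rV[R]_(N * nx + N * (M * nn)))
  (HZ : forall (s : 'I_N) (i : 'I_M), is_Z t sys th geo lam s.+1 i (Z s.+1 i))
  (Zb : nat -> 'I_J -> 'rV[R]_(N * nx + N * (M * nn)))
  (HZb : forall (s : 'I_N) (j : 'I_J), is_Zbar t sys th geo s j (Zb s j)) :
  (* 1) robust (box-bounded) noise *)
  (forall (Gam : 'M[R]_(D nx nn M)) (gam : R),
     Gam \in unitmx -> 0 < gam ->
     let Gamb := kron (1%:M : 'M[R]_N) Gam in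
     (forall v : 'cV[R]_(N * D nx nn M), norminf (Gamb *m v) <= gam ->
        CA t sys th geo lam nud v /\ XU t sys th geo v)
     <->
     (forall (s : 'I_N) (i : 'I_M) (j : 'I_J),
        dual_ok geo lam nud (t + s.+1) i /\
        Y t sys th geo lam nud s.+1 i > gam * norm1 (Z s.+1 i *m P *m invmx Gamb) /\
        Ybar t sys th geo s j - gam * norm1 (Zb s j *m P *m invmx Gamb) >= 0))
  /\
  (* 2) Gaussian noise *)
  (forall (Sig : 'M[R]_(D nx nn M)) (S12 : 'M[R]_(N * D nx nn M)) (eps gca gxu : R)
          (d : measure_display) (Om : measurableType d) (Pr : probability Om R)
          (V : Om -> 'cV[R]_(N * D nx nn M)),
     sym_psd Sig -> sym_psd S12 -> S12 *m S12 = kron (1%:M : 'M[R]_N) Sig ->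
     0 < eps < 1 ->
     Phi gca = 1 - eps / (2 * N * M)%:R ->
     Phi gxu = 1 - eps / (2 * N * J)%:R ->
     (forall r, measurable_fun setT (fun w => V w r ord0)) ->
     (forall (a : 'rV[R]_(N * D nx nn M)) (r : R),
        Pr [set w | (a *m V w) 0 0 <= r] =
        (gauss_cdf (Num.sqrt ((a *m kron (1%:M : 'M[R]_N) Sig *m a^T) 0 0)) r)%:E) ->
     (forall (s : 'I_N) (i : 'I_M) (j : 'I_J),
        dual_ok geo lam nud (t + s.+1) i /\
        Y t sys th geo lam nud s.+1 i > gca * norm2 (Z s.+1 i *m P *m S12) /\
        Ybar t sys th geo s j >= gxu * norm2 (Zb s j *m P *m S12)) ->
     ((1 - eps)%:E <= Pr [set w | CA t sys th geo lam nud (V w) /\ XU t sys th geo (V w)])%E)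
  /\
  (* 3) distributionally robust: any zero-mean law with covariance Sigma *)
  (forall (Sig : 'M[R]_(D nx nn M)) (S12 : 'M[R]_(N * D nx nn M)) (eps : R)
          (d : measure_display) (Om : measurableType d) (Pr : probability Om R)
          (V : Om -> 'cV[R]_(N * D nx nn M)),
     sym_psd Sig -> sym_psd S12 -> S12 *m S12 = kron (1%:M : 'M[R]_N) Sig ->
     0 < eps < 1 ->
     let gca := Num.sqrt (((2 * N * M)%:R - eps) / eps) in
     let gxu := Num.sqrt (((2 * N * J)%:R - eps) / eps) in
     (forall r, measurable_fun setT (fun w => V w r ord0)) ->
     (forall r, Pr.-integrable setT (fun w => (V w r ord0)%:E)) ->
     (forall r, ('E_Pr[fun w => V w r ord0] = 0)%E) ->
     (forall r r', Pr.-integrable setT (fun w => ((V w r ord0 * V w r' ord0)%R)%:E)) ->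
     (forall r r', ('E_Pr[fun w => (V w r ord0 * V w r' ord0)%R] =
                      (kron (1%:M : 'M[R]_N) Sig r r')%:E)%E) ->
     (forall (s : 'I_N) (i : 'I_M) (j : 'I_J),
        dual_ok geo lam nud (t + s.+1) i /\
        Y t sys th geo lam nud s.+1 i > gca * norm2 (Z s.+1 i *m P *m S12) /\
        Ybar t sys th geo s j >= gxu * norm2 (Zb s j *m P *m S12)) ->
     ((1 - eps)%:E <= Pr [set w | CA t sys th geo lam nud (V w) /\ XU t sys th geo (V w)])%E).
Proof.
split; first by move=> Gam gam; apply: robust_feasibility_iff.
split.
- move=> Sig S12 eps gca gxu d Om Pr V _ [S12_sym _] S12_sqr eps01 Phi_ca Phi_xu mV V_gauss.
  have [ca_ge0 _] := risk_share_bounds HN HM eps01.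
  have [xu_ge0 _] := risk_share_bounds HN HJ eps01.
  apply: (chance_constraints_bound HN HM HJ HP HZ HZb mV) => a y.
    exact: (gaussian_tail_ge mV S12_sym S12_sqr V_gauss (a := a) ca_ge0 Phi_ca).
  exact: (gaussian_tail_gt mV S12_sym S12_sqr V_gauss (a := a) xu_ge0 Phi_xu).
- move=> Sig S12 eps d Om Pr V _ [S12_sym _] S12_sqr eps01 gca gxu mV iV EV iVV EVV.
  have eps_gt0 : 0 < eps by case/andP: eps01.
  have [_ ca_lt] := risk_share_bounds HN HM eps01.
  have [_ xu_lt] := risk_share_bounds HN HJ eps01.
  apply: (chance_constraints_bound HN HM HJ HP HZ HZb mV) => a y.
    exact: (cantelli_tail_ge mV S12_sym S12_sqr iV EV iVV EVV (a := a) eps_gt0 ca_lt).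
  exact: (cantelli_tail_gt mV S12_sym S12_sqr iV EV iVV EVV (a := a) eps_gt0 xu_lt).
Qed.
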